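(* Let $Q$ be a quantale, $S$ a sup-lattice, and $r:Q\to\mathcal{Q}(S)$ a representation of $Q$ on $S$; write $x\cdot a=r(a)(x)$ for $x\in S$, $a\in Q$. Then: (1) the representation is irreducible if and only if, for all $x\in S$, the condition $x\cdot 1_Q\le x$ implies $x=0_S$ or $x=1_S$; (2) if the representation is strong, then it is irreducible; (3) if $Q$ is unital and the representation is pre-unital, then it is irreducible if and only if it is strong.
   Context: A sup-lattice is a complete lattice; a sup-lattice homomorphism preserves arbitrary joins. A quantale is a sup-lattice $Q$ with an associative multiplication $\cdot$ distributing over arbitrary joins in each variable; $0$ and $1$ (or $1_Q$) denote its bottom and top. $Q$ is unital if it has an element $e$ with $e\cdot a=a=a\cdot e$ for all $a$. A quantale homomorphism is a join-preserving map preserving multiplication. For a sup-lattice $S$, $\mathcal{Q}(S)$ is the unital quantale of all sup-lattice endomorphisms of $S$, with pointwise joins, multiplication $f\cdot g=g\circ f$, and unit $\mathrm{id}_S$. A representation of $Q$ on $S$ is a quantale homomorphism $r:Q\to\mathcal{Q}(S)$. It is irreducible if the only principal ideals $I={\downarrow}x\subseteq S$ with $I\cdot Q\subseteq I$ are $\{0_S\}$ and $S$. It is strong if $r(1_Q)$ is the top of $\mathcal{Q}(S)$ (equivalently $x\cdot 1_Q=1_S$ for all $x\neq 0_S$). For unital $Q$, it is pre-unital if $\mathrm{id}_S\le r(e)$. *)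

Record SupLattice := {
  sl_car :> Type;
  sl_le : sl_car -> sl_car -> Prop;
  sl_refl : forall x, sl_le x x;
  sl_antisym : forall x y, sl_le x y -> sl_le y x -> x = y;
  sl_trans : forall x y z, sl_le x y -> sl_le y z -> sl_le x z;
  sl_sup : (sl_car -> Prop) -> sl_car;
  sl_sup_ub : forall (A : sl_car -> Prop) x, A x -> sl_le x (sl_sup A);
  sl_sup_least : forall (A : sl_car -> Prop) y,
      (forall x, A x -> sl_le x y) -> sl_le (sl_sup A) y
}.

Arguments sl_le {s} _ _.
Arguments sl_sup {s} _.

Definition sl_bot (S : SupLattice) : S := sl_sup (fun _ : S => False).
Definition sl_top (S : SupLattice) : S := sl_sup (fun _ : S => True).

Definition img {A B : Type} (f : A -> B) (X : A -> Prop) : B -> Prop :=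
  fun y => exists x, X x /\ y = f x.

Definition sup_preserving {S T : SupLattice} (f : S -> T) : Prop :=
  forall A : S -> Prop, f (sl_sup A) = sl_sup (img f A).

Record Quantale := {
  q_sl :> SupLattice;
  q_mul : q_sl -> q_sl -> q_sl;
  q_assoc : forall a b c, q_mul a (q_mul b c) = q_mul (q_mul a b) c;
  q_distr_l : forall a (A : q_sl -> Prop),
      q_mul a (sl_sup A) = sl_sup (img (q_mul a) A);
  q_distr_r : forall a (A : q_sl -> Prop),
      q_mul (sl_sup A) a = sl_sup (img (fun b => q_mul b a) A)
}.

Arguments q_mul {q} _ _.

Definition is_unit (Q : Quantale) (e : Q) : Prop :=
  forall a : Q, q_mul e a = a /\ q_mul a e = a.

(** A representation r : Q -> Q(S), where Q(S) is the quantale of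
    sup-lattice endomorphisms of S with pointwise joins and
    multiplication f . g = g o f.  We write x . a = r a x. *)
Definition is_representation (Q : Quantale) (S : SupLattice)
    (r : Q -> S -> S) : Prop :=
  (forall a : Q, sup_preserving (r a)) /\
  (* r preserves arbitrary joins (joins in Q(S) are pointwise) *)
  (forall (A : Q -> Prop) (x : S),
      r (sl_sup A) x = sl_sup (img (fun a => r a x) A)) /\
  (* r preserves multiplication: r (a b) = r a . r b = r b o r a *)
  (forall (a b : Q) (x : S), r (q_mul a b) x = r b (r a x)).

(** irreducible: the only principal ideals I = down x with I.Q <= I
    are {0_S} and S *)
Definition irreducible (Q : Quantale) (S : SupLattice)
    (r : Q -> S -> S) : Prop :=
  forall x : S,
    (forall (y : S) (a : Q), sl_le y x -> sl_le (r a y) x) ->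
    (forall y : S, sl_le y x <-> y = sl_bot S) \/
    (forall y : S, sl_le y x <-> True).

(** strong: r (1_Q) is the top element of Q(S), i.e. it lies above
    (pointwise order) every sup-lattice endomorphism of S *)
Definition strong (Q : Quantale) (S : SupLattice)
    (r : Q -> S -> S) : Prop :=
  forall f : S -> S, sup_preserving f ->
    forall x : S, sl_le (f x) (r (sl_top Q) x).

Definition pre_unital (Q : Quantale) (S : SupLattice)
    (r : Q -> S -> S) (e : Q) : Prop :=
  forall x : S, sl_le x (r e x).

(** A principal ideal [down x] is [Q]-stable exactly when
    [x . 1 <= x], since [x . a <= x . 1] and the action is monotone; this
    gives (1). Strongness means [x . 1 = 1] for every [x <> 0], because the
    map sending [0] to [0] and everything else to [1] is a sup-lattice
    endomorphism; then (1) gives (2). For (3), [z := x . 1] always satisfies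
    [z . 1 = x . (1 * 1) <= z], so irreducibility forces [z = 0] or [z = 1];
    pre-unitality gives [x <= x . e <= z], which rules out [z = 0] when
    [x <> 0]. *)

From Corelib Require Import ssreflect ssrfun.
From Stdlib Require Import Classical ClassicalEpsilon.

#[local] Arguments sl_refl {s x}.
#[local] Arguments sl_trans {s x y z}.
#[local] Arguments sl_antisym {s x y}.
#[local] Arguments sl_sup_ub {s A x}.
#[local] Arguments sl_sup_least {s A y}.

Lemma sl_bot_le (S : SupLattice) (y : S) : sl_le (sl_bot S) y.
Proof. by apply: sl_sup_least => x []. Qed.

Lemma sl_le_top (S : SupLattice) (y : S) : sl_le y (sl_top S).
Proof. exact: sl_sup_ub. Qed.

Lemma sl_le_bot_eq (S : SupLattice) (y : S) : sl_le y (sl_bot S) -> y = sl_bot S.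
Proof. by move=> le_y0; apply: sl_antisym => //; apply: sl_bot_le. Qed.

Lemma sl_top_le_eq (S : SupLattice) (y : S) : sl_le (sl_top S) y -> y = sl_top S.
Proof. by move=> le_1y; apply: sl_antisym => //; apply: sl_le_top. Qed.

Lemma sl_sup_pair (S : SupLattice) (x y : S) :
  sl_le x y -> sl_sup (fun z => z = x \/ z = y) = y.
Proof.
move=> le_xy; apply: sl_antisym.
- by apply: sl_sup_least => z [->|->] //; apply: sl_refl.
- by apply: sl_sup_ub; right.
Qed.

Lemma sup_preserving_mono (S T : SupLattice) (f : S -> T) :
  sup_preserving f -> forall x y, sl_le x y -> sl_le (f x) (f y).
Proof.
move=> f_sup x y le_xy.
have := f_sup (fun z => z = x \/ z = y); rewrite sl_sup_pair // => ->.
by apply: sl_sup_ub; exists x; split; first left.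
Qed.

Lemma sup_preserving_bot (S T : SupLattice) (f : S -> T) :
  sup_preserving f -> f (sl_bot S) = sl_bot T.
Proof.
move=> f_sup; apply: sl_le_bot_eq; rewrite /sl_bot f_sup.
by apply: sl_sup_least => _ [? [[] _]].
Qed.

Definition nonzero_indicator (S T : SupLattice) (y : S) : T :=
  if excluded_middle_informative (sl_le y (sl_bot S)) is left _
  then sl_bot T else sl_top T.

Lemma nonzero_indicator_sup_preserving (S T : SupLattice) :
  sup_preserving (nonzero_indicator S T).
Proof.
move=> A; rewrite {1}/nonzero_indicator.
case: excluded_middle_informative => [le_A0|not_le_A0].
- apply/esym/sl_le_bot_eq/sl_sup_least => _ [w [Aw ->]].
  rewrite /nonzero_indicator; case: excluded_middle_informative => [_|not_le_w0].
  + exact: sl_refl.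
  + by case: not_le_w0; apply: sl_trans _ le_A0; apply: sl_sup_ub.
- have [w [Aw not_le_w0]] : exists w, A w /\ ~ sl_le w (sl_bot S).
  { apply: NNPP => no_w; apply: not_le_A0; apply: sl_sup_least => w Aw.
    by apply: NNPP => not_le_w0; apply: no_w; exists w. }
  apply/esym/sl_top_le_eq/sl_sup_ub; exists w; split => //.
  by rewrite /nonzero_indicator; case: excluded_middle_informative.
Qed.

Section Representation.

Variables (Q : Quantale) (S : SupLattice) (r : Q -> S -> S).
Hypothesis hr : is_representation Q S r.

Let one := sl_top Q.

Lemma representation_mono_act (a : Q) [x y : S] :
  sl_le x y -> sl_le (r a x) (r a y).
Proof. by apply: sup_preserving_mono; case: hr. Qed.

Lemma representation_mono (a b : Q) (x : S) :
  sl_le a b -> sl_le (r a x) (r b x).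
Proof.
move=> le_ab; case: hr => _ [r_sup _].
have := r_sup (fun c => c = a \/ c = b) x; rewrite sl_sup_pair // => ->.
by apply: sl_sup_ub; exists a; split; first left.
Qed.

Lemma stable_down_iff (x : S) :
  (forall (y : S) (a : Q), sl_le y x -> sl_le (r a y) x) <->
  sl_le (r one x) x.
Proof.
split=> [stable | le_x1x y a le_yx]; first by apply: stable; apply: sl_refl.
apply: sl_trans _ le_x1x; apply: sl_trans (representation_mono_act a le_yx) _.
by apply: representation_mono; apply: sl_le_top.
Qed.

Lemma down_trivial_iff (x : S) :
  ((forall y : S, sl_le y x <-> y = sl_bot S) \/
   (forall y : S, sl_le y x <-> True)) <->
  x = sl_bot S \/ x = sl_top S.
Proof.
split=> [[down0|down1] | [->|->]].
- by left; apply/down0/sl_refl.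
- by right; apply: sl_top_le_eq; apply/down1.
- by left=> y; split=> [/sl_le_bot_eq | ->] //; apply: sl_refl.
- by right=> y; split=> // _; apply: sl_le_top.
Qed.

Lemma irreducible_iff :
  irreducible Q S r <->
  (forall x : S, sl_le (r one x) x -> x = sl_bot S \/ x = sl_top S).
Proof.
by split=> irr x /stable_down_iff /irr /down_trivial_iff.
Qed.

Lemma strong_iff :
  strong Q S r <-> (forall x : S, x <> sl_bot S -> r one x = sl_top S).
Proof.
split=> [str x x_neq0 | act1 f f_sup x].
- apply: sl_top_le_eq; have := str _ (nonzero_indicator_sup_preserving S S) x.
  by rewrite /nonzero_indicator; case: excluded_middle_informative => [/sl_le_bot_eq /x_neq0|].
- have [->|x_neq0] := classic (x = sl_bot S).
  + by rewrite sup_preserving_bot //; apply: sl_bot_le.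
  + by rewrite act1 //; apply: sl_le_top.
Qed.

Lemma strong_irreducible : strong Q S r -> irreducible Q S r.
Proof.
move=> /strong_iff act1; apply/irreducible_iff => x le_x1x.
have [->|x_neq0] := classic (x = sl_bot S); first by left.
by right; apply: sl_top_le_eq; rewrite -(act1 x x_neq0).
Qed.

Lemma top_action_stable (x : S) : sl_le (r one (r one x)) (r one x).
Proof.
case: hr => _ [_ r_mul]; rewrite -r_mul.
by apply: representation_mono; apply: sl_le_top.
Qed.

Lemma irreducible_strong (e : Q) :
  pre_unital Q S r e -> irreducible Q S r -> strong Q S r.
Proof.
move=> pre irr; apply/strong_iff => x x_neq0.
have [z0|//] := proj1 irreducible_iff irr _ (top_action_stable x).
case: x_neq0; apply: sl_le_bot_eq; rewrite -z0.
by apply: sl_trans (pre x) _; apply: representation_mono; apply: sl_le_top.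
Qed.

End Representation.

Theorem proposition2p9 (Q : Quantale) (S : SupLattice) (r : Q -> S -> S)
  (hr : is_representation Q S r) :
  (irreducible Q S r <->
     (forall x : S, sl_le (r (sl_top Q) x) x ->
        x = sl_bot S \/ x = sl_top S)) /\
  (strong Q S r -> irreducible Q S r) /\
  (forall e : Q, is_unit Q e -> pre_unital Q S r e ->
     (irreducible Q S r <-> strong Q S r)).
Proof.
split; first exact: irreducible_iff.
split; first exact: strong_irreducible.
move=> e _ pre; split; [exact: irreducible_strong pre | exact: strong_irreducible].
Qed.
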